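(* Let $0\le b<d\le n$ be integers and fix a homological degree. (1) If $\hat z$ is a relative cycle of $\hat K(b,d]$ whose boundary $\partial\hat z$ contains $\sigma\times\{b\}$ with $\min\sigma=b$, then $[\hat z]\notin\operatorname{im}\big(H(\hat K(b-1,d])\to H(\hat K(b,d])\big)$. (2) If $\hat z$ is a relative cycle of $\hat K[b,d)$ whose boundary $\partial\hat z$ contains $\sigma\times\{d\}$ with $\max\sigma=d$, then $[\hat z]\notin\operatorname{im}\big(H(\hat K[b,d+1))\to H(\hat K[b,d))\big)$. (3) If $\hat z$ is a relative cycle of $\hat K(b,d)$ whose boundary $\partial\hat z$ contains $\sigma\times\{b\}$ with $\min\sigma=b$ and $\tau\times\{d\}$ with $\max\tau=d$, then $[\hat z]\notin\operatorname{im}\big(H(\hat K(b-1,d))\to H(\hat K(b,d))\big)$ and $[\hat z]\notin\operatorname{im}\big(H(\hat K(b,d+1))\to H(\hat K(b,d))\big)$.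
   Context: Fix a field $\mathbb F$; all chains and homology groups have coefficients in $\mathbb F$. Let $n\ge 1$ and let $K$ be a finite $\Delta$-complex (distinct simplices may have the same boundary) in which every simplex $\sigma$ carries an integer interval $T(\sigma)=[\min\sigma,\max\sigma]\subseteq[0,n]$ with $\min\sigma<\max\sigma$, such that for each integer $i$ the set $K_i=\{\sigma: i\in T(\sigma)\}$ is a subcomplex (these form a zigzag $K_0\to K_1\leftarrow K_2\to\cdots$), and such that whenever $\sigma$ is a proper face of $\tau$ we have $\min\sigma<\min\tau<\max\tau<\max\sigma$. The prism $\hat K$ is the cell complex whose cells are the vertical cells $\sigma\times\{i\}$ for $\sigma\in K$ and integers $i\in T(\sigma)$ (of dimension $\dim\sigma$) and the horizontal cells $\sigma\times[i,i+1]$ for integers $i$ with $[i,i+1]\subseteq T(\sigma)$ (of dimension $\dim\sigma+1$), with boundary $\partial(\sigma\times\{i\})=(\partial\sigma)\times\{i\}$ and $\partial(\sigma\times[i,i+1])=(\partial\sigma)\times[i,i+1]+(-1)^{\dim\sigma}(\sigma\times\{i+1\}-\sigma\times\{i\})$ (terms not in $\hat K$ do not occur). For integers $i\le j$, $\hat K_i^j$ is the subcomplex of cells $\sigma\times T$ with $T\subseteq[i,j]$; so $\hat K_{-1}^{n+1}=\hat K$. For integers $b\le d$ define the pairs $\hat K[b,d]=(\hat K_b^d,\emptyset)$, $\hat K(b,d]=(\hat K_{-1}^d,\hat K_{-1}^b)$, $\hat K[b,d)=(\hat K_b^{n+1},\hat K_d^{n+1})$, $\hat K(b,d)=(\hat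 K,\hat K_{-1}^b\cup\hat K_d^{n+1})$, and write $H(\cdot)$ for their relative homology; maps between these groups are induced by inclusions of pairs. A relative cycle of a pair $(X,A)$ is a chain in $X$ whose boundary lies in $A$. A chain ''contains'' a cell if the cell's coefficient is nonzero. *)

From HB Require Import structures.
From mathcomp Require Import all_boot all_order all_algebra.
Set Implicit Arguments.
Unset Strict Implicit.
Unset Printing Implicit Defensive.
Import Order.TTheory GRing.Theory Num.Theory.
Local Open Scope ring_scope.

(* A finite Delta-complex with an integer interval T(s) = [tmin s, tmax s]
   attached to every simplex.  [face s j] is the j-th face of s
   (delete vertex j), meaningful for 0 < sdim s and j <= sdim s. *)
Record zzcx := ZZCx {
  simp : finType;
  sdim : simp -> nat;
  face : simp -> nat -> simp;
  tmin : simp -> nat;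
  tmax : simp -> nat }.

Inductive pface (K : zzcx) : simp K -> simp K -> Prop :=
| pface_face (t : simp K) (j : nat) :
    (0 < sdim t)%N -> (j <= sdim t)%N -> pface (face t j) t
| pface_trans (s r t : simp K) : pface s r -> pface r t -> pface s t.

Definition zz_axioms (n : nat) (K : zzcx) : Prop :=
  [/\
      (forall (t : simp K) j, (0 < sdim t)%N -> (j <= sdim t)%N ->
          sdim (face t j) = (sdim t).-1),
      (forall (t : simp K) i j, (1 < sdim t)%N -> (i < j)%N -> (j <= sdim t)%N ->
          face (face t j) i = face (face t i) j.-1),
      (forall s : simp K, (tmin s < tmax s)%N /\ (tmax s <= n)%N),
      (forall (i : nat) (s t : simp K), pface s t ->
          (tmin t <= i <= tmax t)%N -> (tmin s <= i <= tmax s)%N)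
    &
      (forall s t : simp K, pface s t ->
          [/\ (tmin s < tmin t)%N, (tmin t < tmax t)%N & (tmax t < tmax s)%N])].

Section Prism.
Variables (F : fieldType) (n : nat) (K : zzcx).

(* cells of the prism: (s, t, false) = s x {t}, (s, t, true) = s x [t, t+1] *)
Definition cell := (simp K * 'I_n.+1 * bool)%type.

Definition valid (e : cell) : bool :=
  let: (s, t, h) := e in
  if h then (tmin s <= t)%N && (t.+1 <= tmax s)%N
  else (tmin s <= t <= tmax s)%N.

Definition cdim (e : cell) : nat :=
  let: (s, _, h) := e in (sdim s + h)%N.

Definition bcoef (t s : simp K) : F :=
  \sum_(j < (sdim t).+1)
     (if (0 < sdim t)%N && (face t j == s) then (-1) ^+ j else 0).

(* coefficient of the cell e in the boundary of the cell f *)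
Definition inc (f e : cell) : F :=
  match f, e with
  | (t, i, false), (s, i', false) => if i' == i then bcoef t s else 0
  | (t, i, false), (_, _, true) => 0
  | (t, i, true), (s, i', true) => if i' == i then bcoef t s else 0
  | (t, i, true), (s, i', false) =>
      (-1) ^+ (sdim t) *
      (((s == t) && (val i' == (val i).+1)%N)%:R - ((s == t) && (i' == i))%:R)
  end.

Definition chain := {ffun cell -> F}.

(* boundary map (terms not in the prism do not occur) *)
Definition bd (c : chain) : chain :=
  [ffun e => if valid e then \sum_(f : cell) c f * inc f e else 0].

(* the subcomplex \hat K_lo^hi : cells s x T with T \subseteq [lo, hi] *)
Definition sub (lo hi : int) (e : cell) : bool :=
  let: (_, t, h) := e in
  if h then (lo <= (val t)%:Z) && (((val t).+1)%:Z <= hi)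
  else (lo <= (val t)%:Z) && ((val t)%:Z <= hi).

Definition cpair := ((cell -> bool) * (cell -> bool))%type.

Definition inchain (k : nat) (X : cell -> bool) (c : chain) : Prop :=
  forall e, c e != 0 -> [&& valid e, X e & cdim e == k].

Definition relcycle (k : nat) (P : cpair) (z : chain) : Prop :=
  inchain k P.1 z /\ (forall e, bd z e != 0 -> P.2 e).

(* for (X',A') included in (X,A) and z a relative k-cycle of (X,A):
   [z] lies in the image of H_k(X',A') -> H_k(X,A) (map induced by inclusion),
   i.e. z is homologous in (X,A) to a relative cycle z' of (X',A'):
   z - z' \in B_k(X) + C_k(A). *)
Definition in_image (k : nat) (P' P : cpair) (z : chain) : Prop :=
  exists z', relcycle k P' z' /\
    exists c a, [/\ inchain k.+1 P.1 c, inchain k P.2 a & z - z' = bd c + a].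

(* the pairs \hat K(b,d], \hat K[b,d), \hat K(b,d) *)
Definition pOC (b d : int) : cpair := (sub (-1) d, sub (-1) b).
Definition pCO (b d : int) : cpair := (sub b (n.+1)%:Z, sub d (n.+1)%:Z).
Definition pOO (b d : int) : cpair :=
  (sub (-1) (n.+1)%:Z, fun e => sub (-1) b e || sub d (n.+1)%:Z e).

End Prism.

From HB Require Import structures.
From mathcomp Require Import all_boot all_order all_algebra.
From mathcomp Require Import zify.

Set Implicit Arguments.
Unset Strict Implicit.
Unset Printing Implicit Defensive.
Import GRing.Theory Num.Theory.
Local Open Scope ring_scope.

(* If min s = b, the only prism cells whose boundary meets s x {b} are
   s x [b, b+1] (cofaces t of s have min t > b, so t x {b} is not a cell),
   and s x [b, b+1] itself lies in the boundary of no cell.  Hence at s x {b}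
   the boundary of a boundary vanishes, and so does the boundary of a chain of
   the subcomplex \hat K_{-1}^b, which does not contain s x [b, b+1].  A
   relative cycle z' of \hat K(b-1, d] has no boundary at s x {b} either, so
   z = z' + bd c + a has none, contradicting the hypothesis on z.  The case
   max s = d is symmetric, with s x [d-1, d]. *)

Section Prism.
Variables (F : fieldType) (n : nat) (K : zzcx).

Hypothesis face_bounds : forall s t : simp K, pface s t ->
  [/\ (tmin s < tmin t)%N, (tmin t < tmax t)%N & (tmax t < tmax s)%N].

Implicit Types (c a z : chain F n K) (s : simp K) (t : 'I_n.+1).

Lemma bcoef_neq0_pface (t s : simp K) : bcoef F t s != 0 -> pface s t.
Proof.
move=> bts_neq0.
have [j /andP [dim_gt0 /eqP <-]] :
    exists j : 'I_(sdim t).+1, (0 < sdim t)%N && (face t j == s).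
  apply/existsP; apply: contraR bts_neq0 => /existsPn no_face.
  by apply/eqP; apply: big1 => j _; rewrite (negbTE (no_face j)).
by apply: pface_face; rewrite // -ltnS.
Qed.

Lemma bdD c1 c2 e : bd (c1 + c2) e = bd c1 e + bd c2 e.
Proof.
rewrite !ffunE; case: (valid e); last by rewrite addr0.
by rewrite -big_split; apply: eq_bigr => f _; rewrite ffunE mulrDl.
Qed.

Lemma bd_neq0_valid c e : bd c e != 0 -> valid e.
Proof. by rewrite ffunE; case: (valid e); rewrite ?eqxx. Qed.

Lemma inchain_valid k X c : inchain k X c -> forall e, c e != 0 -> valid e.
Proof. by move=> cX e /cX /and3P []. Qed.

Lemma inchain_out k X c e : inchain k X c -> ~~ X e -> c e = 0.
Proof. by move=> cX; apply: contraNeq => /cX /and3P []. Qed.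

Lemma bd_horizontal_end c s t :
  (forall e, c e != 0 -> valid e) ->
  (t <= tmin s)%N || (tmax s <= t.+1)%N -> bd c (s, t, true) = 0.
Proof.
move=> c_valid t_end; rewrite ffunE; case: ifP => // _.
apply: big1 => -[[r i] h] _.
have [-> | cf_neq0] := eqVneq (c (r, i, h)) 0; first by rewrite mul0r.
case: h cf_neq0 (c_valid _ cf_neq0) => //= _ ri_valid; last by rewrite mulr0.
case: eqP => [ti | _]; last by rewrite mulr0.
have [-> | /bcoef_neq0_pface /face_bounds [smin _ smax]] := eqVneq (bcoef F r s) 0.
  by rewrite mulr0.
by exfalso; move: ri_valid smin smax t_end; rewrite ti; lia.
Qed.

Lemma bd_vertical_min c s t :
  (forall e, c e != 0 -> valid e) -> c (s, t, true) = 0 ->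
  tmin s = t -> bd c (s, t, false) = 0.
Proof.
move=> c_valid c_st smin; rewrite ffunE; case: ifP => // _.
apply: big1 => -[[r i] h] _.
have [-> | cf_neq0] := eqVneq (c (r, i, h)) 0; first by rewrite mul0r.
case: h cf_neq0 (c_valid _ cf_neq0) => /= _ ri_valid.
  have [rs | _] := eqVneq s r; last by rewrite subrr !mulr0.
  subst r; have [ti | _] := eqVneq t i; first by rewrite -ti c_st mul0r.
  by rewrite /= ltn_eqF ?subrr ?mulr0 //; lia.
case: eqP => [ti | _]; last by rewrite mulr0.
have [-> | /bcoef_neq0_pface /face_bounds [rmin _ _]] := eqVneq (bcoef F r s) 0.
  by rewrite mulr0.
by exfalso; move: ri_valid rmin; rewrite smin ti; lia.
Qed.

Lemma bd_vertical_max c s t :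
  (forall e, c e != 0 -> valid e) ->
  (forall i : 'I_n.+1, i.+1 = t -> c (s, i, true) = 0) ->
  tmax s = t -> bd c (s, t, false) = 0.
Proof.
move=> c_valid c_st smax; rewrite ffunE; case: ifP => // _.
apply: big1 => -[[r i] h] _.
have [-> | cf_neq0] := eqVneq (c (r, i, h)) 0; first by rewrite mul0r.
case: h cf_neq0 (c_valid _ cf_neq0) => /= _ ri_valid.
  have [rs | _] := eqVneq s r; last by rewrite subrr !mulr0.
  subst r; have [ti | _] := eqVneq (nat_of_ord t) i.+1.
    by rewrite (c_st i (esym ti)) mul0r.
  have [ti | _] := eqVneq t i; last by rewrite subrr !mulr0.
  by exfalso; move: ri_valid; rewrite smax ti; lia.
case: eqP => [ti | _]; last by rewrite mulr0.
have [-> | /bcoef_neq0_pface /face_bounds [_ _ rmax]] := eqVneq (bcoef F r s) 0.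
  by rewrite mulr0.
by exfalso; move: ri_valid rmax; rewrite smax ti; lia.
Qed.

Lemma in_image_bd_eq0 k (P' P : cpair n K) z e :
  ~~ P'.2 e ->
  (forall c, inchain k.+1 P.1 c -> bd (bd c) e = 0) ->
  (forall a, inchain k P.2 a -> bd a e = 0) ->
  in_image k P' P z -> bd z e = 0.
Proof.
move=> e_notA' bdbd0 bdrel0 [z' [[_ z'_rel] [c [a [cX aA z_eq]]]]].
have -> : z = z' + (bd c + a) by rewrite -z_eq addrC subrK.
rewrite !bdD (bdbd0 c) // (bdrel0 a) // !addr0.
exact: contraNeq (z'_rel e) e_notA'.
Qed.

Lemma not_in_image_min k (P' P : cpair n K) z s t :
  tmin s = t -> ~~ P'.2 (s, t, false) -> ~~ P.2 (s, t, true) ->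
  bd z (s, t, false) != 0 -> ~ in_image k P' P z.
Proof.
move=> smin st_notA' st_notA /eqP bdz_neq0 img; apply: bdz_neq0.
apply: (in_image_bd_eq0 st_notA') img.
- move=> c cX; apply: bd_vertical_min => //; first exact: bd_neq0_valid.
  by apply: bd_horizontal_end; [exact: inchain_valid cX | rewrite smin leqnn].
- move=> a aA; apply: bd_vertical_min => //; first exact: inchain_valid aA.
  exact: inchain_out aA st_notA.
Qed.

Lemma not_in_image_max k (P' P : cpair n K) z s t :
  tmax s = t -> ~~ P'.2 (s, t, false) ->
  (forall i : 'I_n.+1, i.+1 = t -> ~~ P.2 (s, i, true)) ->
  bd z (s, t, false) != 0 -> ~ in_image k P' P z.
Proof.
move=> smax st_notA' st_notA /eqP bdz_neq0 img; apply: bdz_neq0.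
apply: (in_image_bd_eq0 st_notA') img.
- move=> c cX; apply: bd_vertical_max => //; first exact: bd_neq0_valid.
  move=> i it; apply: bd_horizontal_end; first exact: inchain_valid cX.
  by rewrite smax -it leqnn orbT.
- move=> a aA; apply: bd_vertical_max => //; first exact: inchain_valid aA.
  by move=> i it; apply: inchain_out aA (st_notA i it).
Qed.

End Prism.

Theorem lemma5p2 (F : fieldType) (n : nat) (K : zzcx) (HK : zz_axioms n K)
  (b d k : nat) (Hbd : (b < d)%N) (Hdn : (d <= n)%N) :
  [/\
   (* (1) *)
   (forall z : chain F n K, relcycle k (pOC n K b%:Z d%:Z) z ->
     forall (s : simp K) (t : 'I_n.+1), tmin s = b -> val t = b ->
     bd z (s, t, false) != 0 ->
     ~ in_image k (pOC n K (b%:Z - 1) d%:Z) (pOC n K b%:Z d%:Z) z),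
   (* (2) *)
   (forall z : chain F n K, relcycle k (pCO n K b%:Z d%:Z) z ->
     forall (s : simp K) (t : 'I_n.+1), tmax s = d -> val t = d ->
     bd z (s, t, false) != 0 ->
     ~ in_image k (pCO n K b%:Z (d%:Z + 1)) (pCO n K b%:Z d%:Z) z)
  & (* (3) *)
   (forall z : chain F n K, relcycle k (pOO n K b%:Z d%:Z) z ->
     forall (s r : simp K) (t u : 'I_n.+1),
     tmin s = b -> val t = b -> tmax r = d -> val u = d ->
     bd z (s, t, false) != 0 -> bd z (r, u, false) != 0 ->
     ~ in_image k (pOO n K (b%:Z - 1) d%:Z) (pOO n K b%:Z d%:Z) z /\
     ~ in_image k (pOO n K b%:Z (d%:Z + 1)) (pOO n K b%:Z d%:Z) z)].
Proof.
(* Ordinals are destructed so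
   that [val t] and the coercion [nat_of_ord t] become the same atom for lia. *)
case: HK => _ _ _ _ face_bounds; split.
- move=> z _ s [t ?] smin /= tb bdz.
  by apply: (not_in_image_min face_bounds) bdz; rewrite /= ?smin ?tb //; lia.
- move=> z _ s [t ?] smax /= td bdz.
  apply: (not_in_image_max face_bounds) bdz; rewrite /= ?smax ?td //; first lia.
  by move=> i /= i_succ; lia.
- move=> z _ s r [t ?] [u ?] smin /= tb rmax /= ud bdzt bdzu; split.
  + by apply: (not_in_image_min face_bounds) bdzt; rewrite /= ?smin ?tb //; lia.
  + apply: (not_in_image_max face_bounds) bdzu; rewrite /= ?rmax ?ud //; first lia.
    by move=> i /= i_succ; lia.
Qed.
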